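(* Let $\beta>1$ and $M\ge1$, and let $$g(\mathbf{p})=\log2-\frac{\beta|\mathbf{p}|^2}{2}+\big\langle\log\cosh(\beta\,\mathbf{s}\cdot\mathbf{p})\big\rangle_{\mathbf{s}},\qquad \mathbf{p}\in\mathbb{R}^M.$$ Then the global maximum of $g$ (equivalently the minimum of the free energy $-g/\beta$) is attained exactly at the two symmetric points $\mathbf{p}=\pm m_0(\beta)\mathbf{1}$.
   Context: $m_0(\beta)$ is the largest nonnegative solution of $m=\tanh(\beta m)$ (positive for $\beta>1$). $\langle\cdot\rangle_{\mathbf{s}}$ is expectation over $\mathbf{s}\in\{-1,1\}^M$ with i.i.d. entries of mean $m_0(\beta)$. *)

From HB Require Import structures.
From mathcomp Require Import all_boot all_order all_algebra.
From mathcomp Require Import all_classical all_reals all_analysis.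
Set Implicit Arguments. Unset Strict Implicit. Unset Printing Implicit Defensive.
Import Order.TTheory GRing.Theory Num.Theory.
Local Open Scope ring_scope.

Section Defs.
Variable R : realType.

Definition coshR (x : R) : R := (expR x + expR (- x)) / 2.
Definition tanhR (x : R) : R := (expR x - expR (- x)) / (expR x + expR (- x)).

Definition is_m0 (beta m : R) : Prop :=
  [/\ 0 <= m, m = tanhR (beta * m)
    & forall m', 0 <= m' -> m' = tanhR (beta * m') -> m' <= m].

Definition spin (b : bool) : R := if b then 1 else -1.

(* probability of the configuration s in {-1,1}^M with i.i.d. entries of mean m:
   P(s_i = sigma) = (1 + m sigma)/2 *)
Definition spin_weight (M : nat) (m : R) (s : {ffun 'I_M -> bool}) : R :=
  \prod_(i < M) ((1 + m * spin (s i)) / 2).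

Definition spin_avg (M : nat) (m : R) (f : {ffun 'I_M -> bool} -> R) : R :=
  \sum_(s : {ffun 'I_M -> bool}) spin_weight m s * f s.

Definition dot_spin (M : nat) (s : {ffun 'I_M -> bool}) (p : 'rV[R]_M) : R :=
  \sum_(i < M) spin (s i) * p ord0 i.

Definition sqnorm (M : nat) (p : 'rV[R]_M) : R := \sum_(i < M) p ord0 i ^+ 2.

Definition g_fun (M : nat) (beta m : R) (p : 'rV[R]_M) : R :=
  ln 2 - beta * sqnorm p / 2
  + spin_avg m (fun s => ln (coshR (beta * dot_spin s p))).

End Defs.

From HB Require Import structures.
From mathcomp Require Import all_boot all_order all_algebra.
From mathcomp Require Import all_classical all_reals all_analysis.
From mathcomp Require Import ring lra.
Import Order.TTheory GRing.Theory Num.Theory.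
Local Open Scope ring_scope.

(* Put h = beta m0, so that m0 = tanh h, and write S(s) = sum_i s_i for the
   total spin.  The product weight of mean m0 is exp (h S(s)) / (2 cosh h)^M,
   and since ln cosh is even the average in g may be taken against its
   flip-symmetrisation q(s) = cosh (h S(s)) / (2 cosh h)^M.
   Gibbs' inequality  sum q ln c <= sum q ln q + ln (sum c), applied to
   c(s) = cosh (beta s.p) with  sum_s c(s) = prod_i 2 cosh (beta p_i),  gives
     g(p) <= ln 2 + sum q ln q + sum_i (ln 2 + phi(p_i)),
     phi(x) = ln cosh (beta x) - beta x^2 / 2,
   with equality iff c is proportional to q.  Since beta > 1, the one-site
   potential phi has its strict maximum exactly at +-m0 (its derivative is
   beta (tanh (beta x) - x), and tanh (beta x) - x is concave on [0, +oo) with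
   a unique positive zero, which is m0).  Both bounds are attained at
   p = +-m0 1, so a maximiser has every p_i = +-m0 and c proportional to q;
   comparing c at the all-plus configuration with c at the sign pattern of p
   forces all signs to agree.
   The file develops: hyperbolic functions and their derivatives; the
   one-site analysis; sums over spin configurations; Gibbs' inequality; the
   assembly, ending with the theorem. *)

Section Hyperbolic.
Context {R : realType}.
Implicit Types x y : R.

Definition sinhR y : R := (expR y - expR (- y)) / 2.

Lemma coshR_gt0 y : 0 < coshR y.
Proof. by rewrite /coshR divr_gt0 // addr_gt0 ?expR_gt0. Qed.

Lemma coshRN y : coshR (- y) = coshR y.
Proof. by rewrite /coshR opprK addrC. Qed.

Lemma coshR_norm y : coshR `|y| = coshR y.
Proof. by case: (ler0P y) => y0; rewrite ?ler0_norm ?gtr0_norm ?coshRN. Qed.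

Lemma tanhRE y : tanhR y = sinhR y / coshR y.
Proof.
rewrite /tanhR /sinhR /coshR; field.
by rewrite gt_eqF // addr_gt0 ?expR_gt0.
Qed.

Lemma coshR2_sinhR2 y : coshR y ^+ 2 - sinhR y ^+ 2 = 1.
Proof.
have e := expRxMexpNx_1 y.
rewrite /coshR /sinhR; set a := expR y in e *; set b := expR (- y) in e *.
by transitivity (a * b); [field | exact: e].
Qed.

Lemma tanhR_lt1 y : tanhR y < 1.
Proof.
rewrite /tanhR ltr_pdivrMr ?addr_gt0 ?expR_gt0 // mul1r.
have := expR_gt0 (- y); lra.
Qed.

Lemma coshR_lt {x y} : 0 <= x -> x < y -> coshR x < coshR y.
Proof.
move=> x0 xy; rewrite /coshR ltr_pM2r // !expRN.
have A1 : 1 <= expR x by rewrite -expR0 ler_expR.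
have AB : expR x < expR y by rewrite ltr_expR.
set A := expR x in A1 AB *; set B := expR y in AB *.
have A0 : 0 < A by apply: lt_le_trans A1.
rewrite -subr_gt0.
have -> : B + B^-1 - (A + A^-1) = (B - A) * (A * B - 1) / (A * B).
  by field; rewrite !gt_eqF // (lt_trans A0 AB).
rewrite divr_gt0 ?mulr_gt0 ?subr_gt0 //; first nra.
exact: lt_trans AB.
Qed.

Lemma coshR_inj_norm {x y} : coshR x = coshR y -> `|x| = `|y|.
Proof.
rewrite -(coshR_norm x) -(coshR_norm y) => e.
case: (ltgtP `|x| `|y|) => // lt.
  by have := coshR_lt (normr_ge0 x) lt; rewrite e ltxx.
by have := coshR_lt (normr_ge0 y) lt; rewrite e ltxx.
Qed.

Lemma coshR_le_expR y : 0 <= y -> coshR y <= expR y.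
Proof.
move=> y0; rewrite /coshR ler_pdivrMr // -subr_ge0.
have : expR (- y) <= expR y by rewrite ler_expR; lra.
lra.
Qed.

Lemma is_derive_expRN y : is_derive y 1 (fun z : R => expR (- z)) (- expR (- y)).
Proof.
have := is_derive1_comp (is_derive_expR (- y)) (is_deriveNid y 1).
by rewrite mulrN1.
Qed.

Lemma is_derive_coshR y : is_derive y 1 (@coshR R) (sinhR y).
Proof.
have := is_deriveZ (2^-1) (is_deriveD (is_derive_expR y) (is_derive_expRN y)).
have -> : 2^-1 \*: ((@expR R) + (fun z => expR (- z))) = @coshR R.
  by apply/funext => z; rewrite /coshR /= mulrC.
by rewrite /sinhR /GRing.scale /= mulrC.
Qed.

Lemma is_derive_sinhR y : is_derive y 1 (@sinhR) (coshR y).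
Proof.
have := is_deriveZ (2^-1) (is_deriveB (is_derive_expR y) (is_derive_expRN y)).
have -> : 2^-1 \*: ((@expR R) - (fun z => expR (- z))) = @sinhR.
  by apply/funext => z; rewrite /sinhR /= mulrC.
by rewrite /coshR /GRing.scale /= opprK mulrC.
Qed.

Lemma is_derive_tanhR y : is_derive y 1 (@tanhR R) (coshR y ^- 2).
Proof.
have cy0 := lt0r_neq0 (coshR_gt0 y).
have := is_deriveM (is_derive_sinhR y) (is_deriveV cy0 (is_derive_coshR y)).
have -> : @sinhR * (fun z => (coshR z)^-1) = @tanhR R.
  by apply/funext => z; rewrite tanhRE.
have e := coshR2_sinhR2 y.
congr is_derive; rewrite /GRing.scale /=.
transitivity ((coshR y ^+ 2 - sinhR y ^+ 2) / coshR y ^+ 2); first by field.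
by rewrite e div1r.
Qed.

Lemma is_derive_ln_coshR y : is_derive y 1 (fun z => ln (coshR z)) (tanhR y).
Proof.
have := is_derive1_comp (is_derive1_ln (coshR_gt0 y)) (is_derive_coshR y).
by rewrite tanhRE mulrC.
Qed.

End Hyperbolic.

Lemma mean_value {R : realType} {f df : R -> R} {a b : R} :
  a < b -> (forall x : R, is_derive x 1 f (df x)) ->
  exists c, [/\ a < c, c < b & f b - f a = df c * (b - a)].
Proof.
move=> ab f'.
have df1 (x : R) : derivable f x 1 by case: (f' x).
have [c] := MVT ab (fun x _ => f' x) (derivable_within_continuous (fun x _ => df1 x)).
by rewrite in_itv /= => /andP[ac cb] e; exists c.
Qed.

Section MeanField.
Context {R : realType} (beta : R).
Hypothesis beta_gt1 : 1 < beta.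
Implicit Types x y : R.

Let beta_gt0 : 0 < beta. Proof. exact: lt_trans beta_gt1. Qed.

Definition mf_defect x : R := tanhR (beta * x) - x.

Definition mf_defect' x : R := beta / coshR (beta * x) ^+ 2 - 1.

Lemma is_derive_mf_defect x : is_derive x 1 mf_defect (mf_defect' x).
Proof.
have lin : is_derive x 1 (fun z => beta * z) beta.
  by have := is_deriveZ beta (is_derive_id x 1); rewrite /GRing.scale /= mulr1.
have := is_deriveB (is_derive1_comp (is_derive_tanhR (beta * x)) lin) (is_derive_id x 1).
by rewrite /mf_defect' mulrC.
Qed.

Lemma mf_defect'_decr {x y} : 0 <= x -> x < y -> mf_defect' y < mf_defect' x.
Proof.
move=> x0 xy; rewrite /mf_defect' ltrD2r (ltr_pM2l beta_gt0).
rewrite ltf_pV2 ?posrE ?exprn_gt0 ?coshR_gt0 // ltrXn2r ?ltW ?coshR_gt0 //.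
by rewrite coshR_lt ?(ltr_pM2l beta_gt0) // mulr_ge0 // ltW.
Qed.

Lemma mf_defect0 : mf_defect 0 = 0.
Proof. by rewrite /mf_defect mulr0 subr0 /tanhR oppr0 subrr mul0r. Qed.

(* Since beta > 1 the mean-field equation has a positive solution:
   mf_defect is positive at ln beta / (2 beta) and negative at 1. *)
Lemma mf_defect_root : exists m, 0 < m /\ mf_defect m = 0.
Proof.
set x1 := ln beta / (2 * beta).
have x1_gt0 : 0 < x1 by rewrite divr_gt0 ?ln_gt0 ?mulr_gt0.
have x1_le1 : x1 <= 1.
  rewrite ler_pdivrMr ?mulr_gt0 // mul1r.
  by have := ln_sublinear beta_gt0; have := beta_gt0; lra.
have pos_x1 : 0 < mf_defect x1.
  have [c [c0 cx1 e]] := mean_value x1_gt0 is_derive_mf_defect.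
  rewrite mf_defect0 !subr0 in e; rewrite e mulr_gt0 // subr_gt0.
  rewrite ltr_pdivlMr ?exprn_gt0 ?coshR_gt0 // mul1r.
  have bc : coshR (beta * c) < expR (beta * x1).
    apply: (lt_le_trans (y := coshR (beta * x1))).
      by rewrite coshR_lt ?(ltr_pM2l beta_gt0) // mulr_ge0 // ltW.
    by rewrite coshR_le_expR // mulr_ge0 // ltW.
  apply: (lt_le_trans (y := expR (beta * x1) ^+ 2)).
    by rewrite ltrXn2r ?ltW ?coshR_gt0.
  rewrite -expRM_natl.
  have -> : 2%:R * (beta * x1) = ln beta by rewrite /x1; field; rewrite gt_eqF.
  by rewrite lnK ?posrE.
have neg_1 : mf_defect 1 < 0 by rewrite /mf_defect mulr1 subr_lt0 tanhR_lt1.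
have df1 (x : R) : derivable mf_defect x 1 by case: (is_derive_mf_defect x).
have sign_change : Num.min (mf_defect x1) (mf_defect 1) <= 0
                    <= Num.max (mf_defect x1) (mf_defect 1).
  by rewrite ge_min le_max (ltW neg_1) (ltW pos_x1) orbT.
have [m] := IVT x1_le1 (derivable_within_continuous (fun x _ => df1 x)) sign_change.
rewrite in_itv /= => /andP[x1m _] root; exists m; split => //.
exact: lt_le_trans x1m.
Qed.

(* From now on m is a positive solution; by concavity it is the only one,
   mf_defect being positive before m and negative after it. *)
Variable m : R.
Hypotheses (m_gt0 : 0 < m) (m_root : mf_defect m = 0).

Lemma mf_defect_gt0 x : 0 < x -> x < m -> 0 < mf_defect x.
Proof.
move=> x0 xm.
have [c1 [c1_gt0 c1x e1]] := mean_value x0 is_derive_mf_defect.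
have [c2 [xc2 c2m e2]] := mean_value xm is_derive_mf_defect.
have d12 := mf_defect'_decr (ltW c1_gt0) (lt_trans c1x xc2).
rewrite mf_defect0 !subr0 in e1; rewrite m_root sub0r in e2.
rewrite ltNge; apply/negP => xle.
have d1 : mf_defect' c1 <= 0 by move: xle; rewrite e1 pmulr_lle0.
have : mf_defect' c2 * (m - x) < 0 by rewrite pmulr_llt0 ?subr_gt0 // (lt_le_trans d12).
lra.
Qed.

Lemma mf_defect_lt0 x : m < x -> mf_defect x < 0.
Proof.
move=> mx.
have [c1 [c1_gt0 c1m e1]] := mean_value m_gt0 is_derive_mf_defect.
have [c2 [mc2 c2x e2]] := mean_value mx is_derive_mf_defect.
rewrite mf_defect0 m_root !subr0 in e1; rewrite m_root subr0 in e2.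
have d1 : mf_defect' c1 = 0.
  by move/esym/eqP: e1; rewrite mulf_eq0 (gt_eqF m_gt0) orbF => /eqP.
rewrite e2 pmulr_llt0 ?subr_gt0 // -d1.
exact: mf_defect'_decr (ltW c1_gt0) (lt_trans c1m mc2).
Qed.

Definition mf_potential x : R := ln (coshR (beta * x)) - beta / 2 * x ^+ 2.

Lemma is_derive_mf_potential x : is_derive x 1 mf_potential (beta * mf_defect x).
Proof.
have lin : is_derive x 1 (fun z => beta * z) beta.
  by have := is_deriveZ beta (is_derive_id x 1); rewrite /GRing.scale /= mulr1.
have lc := is_derive1_comp (is_derive_ln_coshR (beta * x)) lin.
have sq := is_deriveX 2 (is_derive_id x (1 : R)).
apply: is_derive_eq (is_deriveB lc (is_deriveZ (beta / 2) sq)) _.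
by rewrite /mf_defect /GRing.scale /= expr1 mulr1; field.
Qed.

Lemma mf_potentialN x : mf_potential (- x) = mf_potential x.
Proof. by rewrite /mf_potential mulrN coshRN sqrrN. Qed.

Lemma mf_potential_lt_nonneg x : 0 <= x -> x != m -> mf_potential x < mf_potential m.
Proof.
move=> x0; case: (ltgtP x m) => // [xm|mx] _.
  have [c [xc cm e]] := mean_value xm is_derive_mf_potential.
  by rewrite -subr_gt0 e mulr_gt0 ?subr_gt0 // mulr_gt0 // mf_defect_gt0 // (le_lt_trans x0).
have [c [mc cx e]] := mean_value mx is_derive_mf_potential.
rewrite -subr_lt0 e pmulr_llt0 ?subr_gt0 // pmulr_rlt0 //.
exact: mf_defect_lt0.
Qed.

Lemma mf_potential_lt x : x != m -> x != - m -> mf_potential x < mf_potential m.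
Proof.
move=> xm xNm; case: (lerP 0 x) => x0; first exact: mf_potential_lt_nonneg.
rewrite -mf_potentialN mf_potential_lt_nonneg ?oppr_ge0 ?ltW //.
by rewrite eqr_oppLR.
Qed.

Lemma mf_potential_le x : mf_potential x <= mf_potential m.
Proof.
have [->|xm] := eqVneq x m; first by [].
have [->|xNm] := eqVneq x (- m); first by rewrite mf_potentialN.
exact/ltW/mf_potential_lt.
Qed.

Lemma mf_potential_eq x : mf_potential x = mf_potential m -> x = m \/ x = - m.
Proof.
move=> e; have [xm|xm] := eqVneq x m; first by left.
have [xNm|xNm] := eqVneq x (- m); first by right.
by have := @mf_potential_lt x xm xNm; rewrite e ltxx.
Qed.

End MeanField.
Arguments mf_defect_root {R beta}.
Arguments mf_potential_le {R beta} beta_gt1 {m}.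
Arguments mf_potential_eq {R beta} beta_gt1 {m}.

Section Configurations.
Context {R : realType} {M : nat}.
Local Notation config := {ffun 'I_M -> bool}.
Implicit Types (s : config) (p : 'rV[R]_M).

Definition flip s : config := [ffun i => ~~ s i].

Lemma flipK : involutive flip.
Proof. by move=> s; apply/ffunP => i; rewrite !ffunE negbK. Qed.

Lemma sum_flip (F : config -> R) : \sum_(s : config) F (flip s) = \sum_(s : config) F s.
Proof. by rewrite [RHS](reindex_inj (inv_inj flipK)). Qed.

Lemma spin_negb b : spin R (~~ b) = - spin R b.
Proof. by case: b; rewrite /spin ?opprK. Qed.

Lemma spin_sqr b : spin R b * spin R b = 1.
Proof. by case: b; rewrite /spin ?mulrNN mulr1. Qed.

Definition spin_sum s : R := \sum_(i < M) spin R (s i).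

Lemma spin_sum_flip s : spin_sum (flip s) = - spin_sum s.
Proof. by rewrite /spin_sum -sumrN; apply: eq_bigr => i _; rewrite ffunE spin_negb. Qed.

Lemma dot_spin_flip s p : dot_spin (flip s) p = - dot_spin s p.
Proof. by rewrite /dot_spin -sumrN; apply: eq_bigr => i _; rewrite ffunE spin_negb mulNr. Qed.

Lemma dot_spin_const s (c : R) : dot_spin s (const_mx c : 'rV[R]_M) = spin_sum s * c.
Proof. by rewrite /dot_spin /spin_sum mulr_suml; apply: eq_bigr => i _; rewrite mxE. Qed.

Lemma sum_prod_config (f : 'I_M -> bool -> R) :
  \sum_(s : config) \prod_(i < M) f i (s i) = \prod_(i < M) (f i true + f i false).
Proof.
rewrite -bigA_distr_bigA /=; apply: eq_bigr => i _.
by rewrite big_bool.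
Qed.

Lemma sum_spin_weight (m : R) : \sum_(s : config) spin_weight m s = 1.
Proof.
rewrite /spin_weight (sum_prod_config (fun _ b => (1 + m * spin R b) / 2)).
by rewrite big1 // => i _; rewrite /spin; field.
Qed.

Lemma spin_weight_tanhR (h : R) s :
  spin_weight (tanhR h) s = expR (h * spin_sum s) / (2 * coshR h) ^+ M.
Proof.
have site b : (1 + tanhR h * spin R b) / 2 = expR (h * spin R b) / (2 * coshR h).
  have E0 : expR h + expR (- h) != 0 by rewrite gt_eqF // addr_gt0 ?expR_gt0.
  by rewrite tanhRE /coshR /sinhR /spin; case: b; rewrite ?mulr1 ?mulrN1; field.
rewrite /spin_weight (eq_bigr _ (fun i _ => site (s i))) big_split /= prodr_const.
by rewrite card_ord /spin_sum mulr_sumr expR_sum exprVn.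
Qed.

Lemma sum_coshR_dot_spin (a : R) p :
  \sum_(s : config) coshR (a * dot_spin s p) = \prod_(i < M) (2 * coshR (a * p ord0 i)).
Proof.
have sum_exp : \sum_(s : config) expR (a * dot_spin s p)
               = \prod_(i < M) (2 * coshR (a * p ord0 i)).
  have site i : 2 * coshR (a * p ord0 i) =
      expR (a * (spin R true * p ord0 i)) + expR (a * (spin R false * p ord0 i)).
    by rewrite /coshR /spin mul1r mulN1r mulrN; field.
  rewrite (eq_bigr _ (fun i _ => site i)).
  rewrite -(sum_prod_config (fun i b => expR (a * (spin R b * p ord0 i)))).
  by apply: eq_bigr => s _; rewrite /dot_spin mulr_sumr expR_sum.
have sum_expN : \sum_(s : config) expR (- (a * dot_spin s p))
               = \sum_(s : config) expR (a * dot_spin s p).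
  by rewrite -sum_flip; apply: eq_bigr => s _; rewrite dot_spin_flip mulrN opprK.
transitivity ((\sum_(s : config) expR (a * dot_spin s p)
               + \sum_(s : config) expR (- (a * dot_spin s p))) / 2).
  by rewrite -big_split mulr_suml.
by rewrite sum_expN sum_exp; field.
Qed.

Definition sym_weight (m : R) s : R := (spin_weight m s + spin_weight m (flip s)) / 2.

Lemma spin_avg_flip_invariant (m : R) (f : config -> R) :
  (forall s, f (flip s) = f s) -> spin_avg m f = \sum_(s : config) sym_weight m s * f s.
Proof.
move=> f_inv.
have flipped : \sum_(s : config) spin_weight m (flip s) * f s = spin_avg m f.
  by rewrite /spin_avg -sum_flip; apply: eq_bigr => s _; rewrite flipK f_inv.
transitivity ((spin_avg m f + \sum_(s : config) spin_weight m (flip s) * f s) / 2).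
  by rewrite flipped; field.
rewrite /spin_avg -big_split /= mulr_suml.
by apply: eq_bigr => s _; rewrite /sym_weight; field.
Qed.

Lemma sym_weight_tanhR (h : R) s :
  sym_weight (tanhR h) s = coshR (h * spin_sum s) / (2 * coshR h) ^+ M.
Proof.
rewrite /sym_weight !spin_weight_tanhR spin_sum_flip mulrN /coshR; field.
by rewrite expf_neq0 // mulf_neq0 // lt0r_neq0 // coshR_gt0.
Qed.

Lemma sum_sym_weight (m : R) : \sum_(s : config) sym_weight m s = 1.
Proof.
rewrite /sym_weight -mulr_suml big_split /=.
by rewrite (sum_flip (spin_weight m)) sum_spin_weight; field.
Qed.

End Configurations.

Lemma ln_le_subr1 {R : realType} {x : R} : 0 < x -> ln x <= x - 1.
Proof. move=> x0; have := expR_ge1Dx (ln x); rewrite lnK ?posrE //; lra. Qed.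

Lemma ln_eq_subr1 {R : realType} {x : R} : 0 < x -> ln x = x - 1 -> x = 1.
Proof.
move=> x0 e; apply/eqP/negPn/negP => x1.
have := expR_gt1Dx (x := ln x); rewrite ln_eq0 // x1 lnK ?posrE // => /(_ isT).
lra.
Qed.

Section Gibbs.
Context {R : realType} {T : finType}.
Variables (q c : T -> R).
Hypotheses (q_gt0 : forall s, 0 < q s) (q_sum1 : \sum_s q s = 1).
Hypothesis c_gt0 : forall s, 0 < c s.

Definition gibbs_defect : R :=
  ln (\sum_s c s) - (\sum_s q s * ln (c s) - \sum_s q s * ln (q s)).

Let csum_gt0 : 0 < \sum_s c s.
Proof.
have [s0 _|T0] := pickP (@predT T).
  rewrite (bigD1 s0) //= ltr_pwDl ?c_gt0 // sumr_ge0 // => s _.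
  exact/ltW.
by move: q_sum1; rewrite big_pred0 // => /esym/eqP; rewrite oner_eq0.
Qed.

Let ratio s : R := c s / (q s * \sum_s c s).

Let ratio_gt0 s : 0 < ratio s.
Proof. by rewrite divr_gt0 ?mulr_gt0. Qed.

Lemma gibbs_defectE : gibbs_defect = \sum_s q s * (ratio s - 1 - ln (ratio s)).
Proof.
have term s : q s * (ratio s - 1 - ln (ratio s)) = c s / \sum_s c s - q s
    - q s * ln (c s) + q s * ln (q s) + q s * ln (\sum_s c s).
  rewrite /ratio ln_div ?posrE ?mulr_gt0 // lnM ?posrE //.
  by field; rewrite !gt_eqF.
rewrite (eq_bigr _ (fun s _ => term s)) !big_split /= !sumrN -!mulr_suml q_sum1.
by rewrite divff ?gt_eqF //= /gibbs_defect; ring.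
Qed.

Let excess_ge0 s : 0 <= q s * (ratio s - 1 - ln (ratio s)).
Proof. by apply: mulr_ge0; [exact: ltW | rewrite subr_ge0 ln_le_subr1]. Qed.

Lemma gibbs_defect_ge0 : 0 <= gibbs_defect.
Proof. by rewrite gibbs_defectE sumr_ge0. Qed.

Lemma gibbs_defect_eq0 : gibbs_defect = 0 -> forall s, c s = q s * \sum_s c s.
Proof.
rewrite gibbs_defectE => defect_sum0 s.
have defect0 := psumr_eq0P (fun s _ => excess_ge0 s) defect_sum0.
have /eqP := defect0 s isT; rewrite mulf_eq0 gt_eqF //= subr_eq0 => /eqP e.
have := ln_eq_subr1 (ratio_gt0 s) (esym e).
by rewrite /ratio => /divr1_eq ->.
Qed.

Lemma gibbs_defect_prop (k : R) : 0 < k -> (forall s, c s = k * q s) -> gibbs_defect = 0.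
Proof.
move=> k_gt0 ck.
have ln_c s : q s * ln (c s) = q s * ln k + q s * ln (q s).
  by rewrite ck lnM ?posrE // mulrDr.
rewrite /gibbs_defect (eq_bigr _ (fun s _ => ln_c s)) big_split /= -mulr_suml q_sum1.
by rewrite (eq_bigr _ (fun s _ => ck s)) -mulr_sumr q_sum1 mulr1 mul1r addrK subrr.
Qed.

End Gibbs.
Arguments gibbs_defect_ge0 {R T q c}.
Arguments gibbs_defect_eq0 {R T q c}.
Arguments gibbs_defect_prop {R T q c}.

Lemma ln_prod {R : realType} {I : finType} (f : I -> R) :
  (forall i, 0 < f i) -> ln (\prod_i f i) = \sum_i ln (f i).
Proof.
move=> f_gt0; suff [] : 0 < \prod_i f i /\ ln (\prod_i f i) = \sum_i ln (f i) by [].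
apply: (big_rec2 (fun a b => 0 < a /\ ln a = b)) => [|i a b _ [a_gt0 ln_a]].
  by rewrite ln1.
by rewrite mulr_gt0 // lnM ?posrE // ln_a.
Qed.

Lemma sum_eq_max {R : realType} {I : finType} (x : I -> R) (r : R) :
  (forall i, x i <= r) -> \sum_i x i = #|I|%:R * r -> forall i, x i = r.
Proof.
move=> x_le sum_x i; apply/eqP; rewrite eq_sym -subr_eq0; apply/eqP.
apply: (psumr_eq0P (P := predT) (F := fun i => r - x i)) => // [j _|].
  by rewrite subr_ge0.
by rewrite sumrB sum_x sumr_const mulr_natl subrr.
Qed.

Section Maximisers.
Context {R : realType}.
Variables (beta m0 : R) (M : nat).
Hypotheses (beta_gt1 : 1 < beta) (hm0 : is_m0 beta m0).
Local Notation config := {ffun 'I_M -> bool}.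
Implicit Types (s : config) (p : 'rV[R]_M).

Let beta_gt0 : 0 < beta. Proof. exact: lt_trans beta_gt1. Qed.

Lemma m0_gt0 : 0 < m0.
Proof.
have [m [m_gt0 root]] := mf_defect_root beta_gt1.
case: hm0 => _ _ m0_max; apply: lt_le_trans m_gt0 (m0_max _ (ltW m_gt0) _).
by move/eqP: root; rewrite subr_eq0 => /eqP.
Qed.

Lemma m0_root : mf_defect beta m0 = 0.
Proof. by case: hm0 => _ e _; rewrite /mf_defect -e subrr. Qed.

Let q s := sym_weight m0 s.
Let cosh_field p s : R := coshR (beta * dot_spin s p).
Let W : R := (2 * coshR (beta * m0)) ^+ M.

Let W_gt0 : 0 < W.
Proof. by rewrite exprn_gt0 // mulr_gt0 ?coshR_gt0. Qed.

(* q is the normalised cosh (beta m0 S(s)), since m0 = tanh (beta m0). *)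
Let qE s : q s = coshR (beta * m0 * spin_sum s) / W.
Proof. by have [_ e _] := hm0; rewrite /q {1}e sym_weight_tanhR. Qed.

Let q_gt0 s : 0 < q s.
Proof. by rewrite qE divr_gt0 ?coshR_gt0. Qed.

Let q_sum1 : \sum_s q s = 1.
Proof. exact: sum_sym_weight. Qed.

Let cosh_field_gt0 p s : 0 < cosh_field p s.
Proof. exact: coshR_gt0. Qed.

Definition g_max : R :=
  ln 2 + \sum_s q s * ln (q s) + M%:R * (ln 2 + mf_potential beta m0).

Lemma g_funE p : g_fun beta m0 p =
  ln 2 + \sum_s q s * ln (q s) + \sum_(i < M) (ln 2 + mf_potential beta (p ord0 i))
  - gibbs_defect q (cosh_field p).
Proof.
have sites : \sum_(i < M) (ln 2 + mf_potential beta (p ord0 i))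
    = ln (\sum_s cosh_field p s) - beta * sqnorm p / 2.
  rewrite /cosh_field sum_coshR_dot_spin ln_prod => [|i]; last by rewrite mulr_gt0 ?coshR_gt0.
  rewrite /sqnorm mulr_sumr mulr_suml -sumrB; apply: eq_bigr => i _.
  by rewrite lnM ?posrE ?coshR_gt0 // /mf_potential; field.
rewrite sites /g_fun /gibbs_defect spin_avg_flip_invariant.
  by rewrite /q /cosh_field; ring.
by move=> s; rewrite dot_spin_flip mulrN coshRN.
Qed.

(* Gibbs' inequality and the one-site maximum bound g by g_max ... *)
Lemma g_fun_le p : g_fun beta m0 p <= g_max.
Proof.
have sites : \sum_(i < M) (ln 2 + mf_potential beta (p ord0 i))
    <= M%:R * (ln 2 + mf_potential beta m0).
  have site i : ln 2 + mf_potential beta (p ord0 i) <= ln 2 + mf_potential beta m0.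
    by rewrite lerD2l (mf_potential_le beta_gt1 m0_gt0 m0_root).
  apply: le_trans (ler_sum _ (fun i _ => site i)) _.
  by rewrite sumr_const card_ord mulr_natl.
have := gibbs_defect_ge0 q_gt0 q_sum1 (cosh_field_gt0 p).
rewrite g_funE /g_max; lra.
Qed.

(* ... which is attained at +-m0 1, where c is W q and the Gibbs defect vanishes. *)
Lemma g_fun_const c : c = m0 \/ c = - m0 -> g_fun beta m0 (const_mx c : 'rV[R]_M) = g_max.
Proof.
move=> hc.
have cosh_c s : cosh_field (const_mx c) s = W * q s.
  rewrite qE mulrC divfK ?gt_eqF // /cosh_field dot_spin_const.
  by case: hc => ->; [|rewrite -coshRN]; congr coshR; ring.
rewrite g_funE (gibbs_defect_prop q_gt0 q_sum1 _ W_gt0 cosh_c) subr0 /g_max.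
rewrite (eq_bigr (fun _ : 'I_M => ln 2 + mf_potential beta m0)); last first.
  by move=> i _; rewrite mxE; case: hc => ->; rewrite ?mf_potentialN.
by rewrite sumr_const card_ord mulr_natl.
Qed.

Lemma maximiser_sites p : g_fun beta m0 p = g_max ->
  (forall i, p ord0 i = m0 \/ p ord0 i = - m0) /\ gibbs_defect q (cosh_field p) = 0.
Proof.
move=> gp.
set top := ln 2 + mf_potential beta m0.
pose site (i : 'I_M) := ln 2 + mf_potential beta (p ord0 i).
have site_le i : site i <= top by rewrite lerD2l (mf_potential_le beta_gt1 m0_gt0 m0_root).
have sum_le : \sum_i site i <= M%:R * top.
  by apply: le_trans (ler_sum _ (fun i _ => site_le i)) _; rewrite sumr_const card_ord mulr_natl.
have := gibbs_defect_ge0 q_gt0 q_sum1 (cosh_field_gt0 p).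
move: gp; rewrite g_funE /g_max -/top => gp D_ge0.
split; last by lra.
move=> i; apply: (mf_potential_eq beta_gt1 m0_gt0 m0_root).
have /(_ i) : forall i, site i = top by apply: sum_eq_max => //; rewrite card_ord; lra.
by move/addrI.
Qed.

(* If moreover the cosh profile is proportional to q, all signs agree: compare
   the all-plus configuration with the sign pattern of p. *)
Lemma maximiser_aligned p :
  (forall i, p ord0 i = m0 \/ p ord0 i = - m0) ->
  (forall s, cosh_field p s = q s * \sum_s cosh_field p s) ->
  p = const_mx m0 \/ p = const_mx (- m0).
Proof.
move=> sites prop.
have m0_pos := m0_gt0.
have m0_neq : - m0 != m0 by rewrite -subr_eq0 -opprD oppr_eq0 gt_eqF ?addr_gt0.
pose eps : config := [ffun i => p ord0 i == m0].
have p_eps i : p ord0 i = spin R (eps i) * m0.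
  by rewrite ffunE; case: (sites i) => ->; rewrite ?eqxx ?(negbTE m0_neq) /spin ?mul1r ?mulN1r.
pose ones : config := [ffun _ => true].
pose S := \sum_i p ord0 i.
have dot_ones : dot_spin ones p = S by apply: eq_bigr => i _; rewrite ffunE /spin mul1r.
have spin_sum_ones : spin_sum ones = M%:R :> R.
  by rewrite /spin_sum (eq_bigr (fun _ : 'I_M => 1 : R)) ?sumr_const ?card_ord // => i _; rewrite ffunE.
have dot_eps : dot_spin eps p = M%:R * m0.
  rewrite /dot_spin (eq_bigr (fun _ : 'I_M => m0)) ?sumr_const ?card_ord ?mulr_natl // => i _.
  by rewrite p_eps mulrA spin_sqr mul1r.
have spin_sum_eps : beta * m0 * spin_sum eps = beta * S.
  by rewrite /S (eq_bigr _ (fun i _ => p_eps i)) -mulr_suml /spin_sum; ring.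
set A := \sum_s cosh_field p s in prop.
set k := A / W.
have e_ones : coshR (beta * S) = coshR (beta * (M%:R * m0)) * k.
  have := prop ones; rewrite /cosh_field dot_ones qE spin_sum_ones => ->.
  have -> : beta * m0 * M%:R = beta * (M%:R * m0) by ring.
  by rewrite /k [RHS]mulrA [LHS]mulrAC.
have e_eps : coshR (beta * (M%:R * m0)) = coshR (beta * S) * k.
  have := prop eps; rewrite /cosh_field dot_eps qE spin_sum_eps => ->.
  by rewrite /k [RHS]mulrA [LHS]mulrAC.
have k_gt0 : 0 < k by have := coshR_gt0 (beta * S); rewrite e_ones pmulr_rgt0 // coshR_gt0.
have same_cosh : coshR (beta * S) = coshR (beta * (M%:R * m0)).
  have : (coshR (beta * S) - coshR (beta * (M%:R * m0))) * (1 + k) = 0.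
    by rewrite mulrDr mulr1 mulrBl -e_ones -e_eps; ring.
  move/eqP; rewrite mulf_eq0 subr_eq0 => /orP[/eqP //|].
  by rewrite gt_eqF // addr_gt0.
have S_norm : `|S| = M%:R * m0.
  have := coshR_inj_norm same_cosh.
  rewrite !normrM (gtr0_norm beta_gt0) normr_nat (gtr0_norm m0_pos).
  by move/(mulfI (lt0r_neq0 beta_gt0)).
have p_norm i : `|p ord0 i| = m0 by case: (sites i) => ->; rewrite ?normrN gtr0_norm.
have [S_ge0|S_lt0] := lerP 0 S; [left | right]; apply/matrixP => i j; rewrite ord1 mxE.
  apply: (sum_eq_max (fun i => p ord0 i)) => [l|]; first by rewrite -(p_norm l) ler_norm.
  by rewrite card_ord -S_norm ger0_norm.
apply/eqP; rewrite -eqr_oppLR; apply/eqP.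
apply: (sum_eq_max (fun i => - p ord0 i)) => [l|]; first by rewrite -(p_norm l) -normrN ler_norm.
by rewrite sumrN card_ord -S_norm ltr0_norm.
Qed.

Lemma g_fun_eq_max p : g_fun beta m0 p = g_max -> p = const_mx m0 \/ p = const_mx (- m0).
Proof.
move=> gp; have [sites defect0] := maximiser_sites p gp.
exact: maximiser_aligned p sites (gibbs_defect_eq0 q_gt0 q_sum1 (cosh_field_gt0 p) defect0).
Qed.

End Maximisers.
Arguments g_fun_le {R beta m0 M}.
Arguments g_fun_const {R beta m0 M}.
Arguments g_fun_eq_max {R beta m0 M}.

(* The maximisers of g are exactly +-m0 1. *)
Theorem mainTheorem5 (R : realType) (beta : R) (M : nat) (m0 : R)
  (hbeta : 1 < beta) (hM : (1 <= M)%N) (hm0 : is_m0 beta m0) :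
  forall p : 'rV[R]_M,
    (forall q : 'rV[R]_M, g_fun beta m0 q <= g_fun beta m0 p) <->
    (p = const_mx m0 \/ p = const_mx (- m0)).
Proof.
move=> p; split => [p_max | p_const q].
  apply: (g_fun_eq_max hbeta hm0); apply/le_anti.
  rewrite g_fun_le //= -(g_fun_const hm0 m0 (or_introl erefl)).
  exact: p_max.
have g_p : g_fun beta m0 p = g_max beta m0 M.
  case: p_const => ->.
  - exact: g_fun_const hm0 _ (or_introl erefl).
  - exact: g_fun_const hm0 _ (or_intror erefl).
by rewrite g_p g_fun_le.
Qed.
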